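(* Let $S$ be a set of $n$ pairwise disjoint line segments in the plane, $1\le k\le n-1$, and $s\in S$. Let $V_k(s,S)=\bigcup_{H\subset S,\ |H|=k,\ s\in H}\overline{V_k(H,S)}$. Then $s\subseteq V_k(s,S)$ and $V_k(s,S)$ is weakly star-shaped with respect to $s$: for every point $x\in V_k(s,S)$ there exists a point $y\in s$ such that the whole segment $xy$ is contained in $V_k(s,S)$.
   Context: Distances are Euclidean: $d(x,s)=\min_{q\in s}d(x,q)$. $V_k(H,S)=\{x : d(x,s')<d(x,t)\ \forall s'\in H,\ \forall t\in S\setminus H\}$, and $\overline{X}$ denotes topological closure. *)

From Stdlib Require Import Reals Lra List ClassicalEpsilon.
Import ListNotations.
Open Scope R_scope.

Definition point : Type := (R * R)%type.

Definition dist2 (p q : point) : R :=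
  sqrt ((fst p - fst q)^2 + (snd p - snd q)^2).

Definition segment : Type := (point * point)%type.

Definition on_seg (a b : point) (p : point) : Prop :=
  exists t : R, 0 <= t <= 1 /\
    p = (fst a + t * (fst b - fst a), snd a + t * (snd b - snd a)).

Definition in_seg (s : segment) (p : point) : Prop := on_seg (fst s) (snd s) p.

(* d(x,s) = min_{q in s} d(x,q), chosen via Hilbert's epsilon among the
   values r realising the minimum (the minimum exists since s is compact). *)
Definition is_min_dist (x : point) (s : segment) (r : R) : Prop :=
  (exists q, in_seg s q /\ r = dist2 x q) /\
  (forall q, in_seg s q -> r <= dist2 x q).

Definition dist_seg (x : point) (s : segment) : R :=
  epsilon (inhabits 0) (is_min_dist x s).

(* S = {segs 0, ..., segs (n-1)}; subsets H are lists of indices.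
   V_k(H,S) = { x | d(x,s') < d(x,t) for all s' in H, t in S \ H }. *)
Definition Vk_H (segs : nat -> segment) (n : nat) (H : list nat) (x : point) : Prop :=
  forall i j, In i H -> (j < n)%nat -> ~ In j H ->
    dist_seg x (segs i) < dist_seg x (segs j).

Definition closure (A : point -> Prop) (x : point) : Prop :=
  forall eps, 0 < eps -> exists y, A y /\ dist2 x y < eps.

Definition ksubset (n k : nat) (H : list nat) : Prop :=
  NoDup H /\ length H = k /\ (forall i, In i H -> (i < n)%nat).

Definition Vk_s (segs : nat -> segment) (n k i0 : nat) (x : point) : Prop :=
  exists H, ksubset n k H /\ In i0 H /\ closure (Vk_H segs n H) x.

From Stdlib Require Import Reals Rgeom List Lra Lia Classical ClassicalEpsilon.
Import ListNotations.
Open Scope R_scope.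

(* Let x lie in V_k(s,S) via the k-set H, and let y be the point of s nearest
   to x, at distance r. At the point z = x + t (y - x), t > 0, segment s is at
   distance <= (1 - t) r, while a segment outside H (at distance >= r from x)
   cannot be that close: by the equality case of the triangle inequality its
   point nearest to z would be y, so it would meet s. Hence at z fewer than k
   segments are nearer than s. Such a point lies in V_k(s,S): arbitrarily close
   to it there are points with pairwise distinct distances to the segments
   (equidistance of two disjoint segments is nowhere dense), whose k nearest
   segments contain s; as there are finitely many k-sets, one of them serves
   for arbitrarily close points. *)

Lemma dist2_sym p q : dist2 p q = dist2 q p.
Proof. unfold dist2; f_equal; ring. Qed.

Lemma dist2_ge0 p q : 0 <= dist2 p q.
Proof. apply sqrt_pos. Qed.

Lemma dist2_xx p : dist2 p p = 0.
Proof.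
  unfold dist2.
  replace ((fst p - fst p) ^ 2 + (snd p - snd p) ^ 2) with 0 by ring.
  apply sqrt_0.
Qed.

Lemma dist2_sqr p q : dist2 p q ^ 2 = (fst p - fst q) ^ 2 + (snd p - snd q) ^ 2.
Proof.
  unfold dist2; rewrite pow2_sqrt; [reflexivity |].
  pose proof (pow2_ge_0 (fst p - fst q)); pose proof (pow2_ge_0 (snd p - snd q)); lra.
Qed.

Lemma dist2_eq0 p q : dist2 p q = 0 -> p = q.
Proof.
  intro H; pose proof (dist2_sqr p q) as Hsq; rewrite H in Hsq.
  destruct p as [p1 p2], q as [q1 q2]; simpl in Hsq.
  destruct (Rplus_sqr_eq_0 (p1 - q1) (p2 - q2)) as [E1 E2].
  { unfold Rsqr; lra. }
  f_equal; lra.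
Qed.

Lemma dist2_triangle p q r : dist2 p r <= dist2 p q + dist2 q r.
Proof.
  assert (E : forall u v, dist2 u v = dist_euc (fst u) (snd u) (fst v) (snd v)).
  { intros; unfold dist2, dist_euc, Rsqr; f_equal; ring. }
  rewrite !E; apply triangle.
Qed.

Definition interp (x y : point) (t : R) : point :=
  (fst x + t * (fst y - fst x), snd x + t * (snd y - snd x)).

Lemma interp_0 x y : interp x y 0 = x.
Proof. destruct x as [x1 x2]; unfold interp; simpl; f_equal; ring. Qed.

Lemma dist2_interp_l x y t : 0 <= t -> dist2 x (interp x y t) = t * dist2 x y.
Proof.
  intro Ht; unfold dist2, interp; cbn [fst snd].
  replace ((fst x - (fst x + t * (fst y - fst x))) ^ 2 + (snd x - (snd x + t * (snd y - snd x))) ^ 2)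
    with (t ^ 2 * ((fst x - fst y) ^ 2 + (snd x - snd y) ^ 2)) by ring.
  rewrite sqrt_mult_alt by nra; rewrite sqrt_pow2 by lra; reflexivity.
Qed.

Lemma dist2_interp_r x y t : t <= 1 -> dist2 (interp x y t) y = (1 - t) * dist2 x y.
Proof.
  intro Ht; unfold dist2, interp; cbn [fst snd].
  replace ((fst x + t * (fst y - fst x) - fst y) ^ 2 + (snd x + t * (snd y - snd x) - snd y) ^ 2)
    with ((1 - t) ^ 2 * ((fst x - fst y) ^ 2 + (snd x - snd y) ^ 2)) by ring.
  rewrite sqrt_mult_alt by nra; rewrite sqrt_pow2 by lra; reflexivity.
Qed.

(* The ball around [interp x y t] through [y] lies inside the ball around [x]
   through [y] and touches its boundary only at [y]. *)
Lemma interp_ball_touch x y p t : 0 < t <= 1 ->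
  dist2 x y <= dist2 x p -> dist2 (interp x y t) p <= dist2 (interp x y t) y -> p = y.
Proof.
  intros Ht Hxp Hzp; set (r := dist2 x y) in *.
  rewrite dist2_interp_r in Hzp by lra; fold r in Hzp.
  pose proof (dist2_triangle x (interp x y t) p) as Htri.
  rewrite dist2_interp_l in Htri by lra; fold r in Htri.
  assert (Exp : dist2 x p = r) by nra.
  assert (Ezp : dist2 (interp x y t) p = (1 - t) * r) by nra.
  pose proof (dist2_sqr x y) as Sxy; pose proof (dist2_sqr x p) as Sxp.
  pose proof (dist2_sqr (interp x y t) p) as Szp.
  fold r in Sxy; rewrite Exp in Sxp; rewrite Ezp in Szp.
  destruct x as [x1 x2], y as [y1 y2], p as [p1 p2]; unfold interp in Szp; cbn [fst snd] in *.
  assert (Dot : (p1 - x1) * (y1 - x1) + (p2 - x2) * (y2 - x2) = r ^ 2).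
  { assert (Hd : t * (2 * ((p1 - x1) * (y1 - x1) + (p2 - x2) * (y2 - x2)) - 2 * r ^ 2) = 0) by nra.
    apply Rmult_integral in Hd as [Hd | Hd]; lra. }
  destruct (Rplus_sqr_eq_0 (p1 - y1) (p2 - y2)) as [E1 E2].
  { unfold Rsqr; nra. }
  f_equal; lra.
Qed.

Lemma is_min_dist_exists x s : exists r, is_min_dist x s r.
Proof.
  destruct s as [a b].
  set (g := fun t => (fst x - (fst a + t * (fst b - fst a))) ^ 2
                   + (snd x - (snd a + t * (snd b - snd a))) ^ 2).
  assert (Hg : forall c, 0 <= c <= 1 -> continuity_pt g c) by (intros; unfold g; reg).
  destruct (continuity_ab_min g 0 1 ltac:(lra) Hg) as [m [Hm Hm01]].
  exists (sqrt (g m)); split.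
  - exists (interp a b m); split; [exists m; split; auto | reflexivity].
  - intros q [t [Ht ->]]; unfold dist2; cbn [fst snd].
    apply sqrt_le_1_alt, (Hm t Ht).
Qed.

Lemma dist_seg_spec x s : is_min_dist x s (dist_seg x s).
Proof. unfold dist_seg; apply epsilon_spec, is_min_dist_exists. Qed.

Lemma dist_seg_le x s q : in_seg s q -> dist_seg x s <= dist2 x q.
Proof. apply (proj2 (dist_seg_spec x s)). Qed.

Lemma dist_seg_attained x s : exists q, in_seg s q /\ dist_seg x s = dist2 x q.
Proof. apply (proj1 (dist_seg_spec x s)). Qed.

Lemma dist_seg_ge0 x s : 0 <= dist_seg x s.
Proof. destruct (dist_seg_attained x s) as [q [_ ->]]; apply dist2_ge0. Qed.

Lemma dist_seg_lipschitz x z s : dist_seg x s <= dist_seg z s + dist2 x z.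
Proof.
  destruct (dist_seg_attained z s) as [q [Hq ->]].
  apply (Rle_trans _ _ _ (dist_seg_le x s q Hq)).
  rewrite Rplus_comm; apply dist2_triangle.
Qed.

Lemma dist_seg_eq0 x s : dist_seg x s = 0 <-> in_seg s x.
Proof.
  split.
  - destruct (dist_seg_attained x s) as [q [Hq ->]].
    intro H; apply dist2_eq0 in H; subst q; exact Hq.
  - intro Hx; pose proof (dist_seg_le x s x Hx); pose proof (dist_seg_ge0 x s).
    rewrite dist2_xx in *; lra.
Qed.

Definition seg_disjoint (s s' : segment) : Prop :=
  forall p, ~ (in_seg s p /\ in_seg s' p).

Lemma dist_seg_gt0_disjoint p s s' : seg_disjoint s s' -> in_seg s p -> 0 < dist_seg p s'.
Proof.
  intros Hd Hp; destruct (Rle_lt_or_eq_dec _ _ (dist_seg_ge0 p s')) as [H | H]; auto.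
  exfalso; apply (Hd p); split; [exact Hp | apply dist_seg_eq0; auto].
Qed.

Lemma dist_seg_lt_toward_nearest x y t s s' :
  seg_disjoint s s' -> in_seg s y -> dist_seg x s = dist2 x y ->
  dist_seg x s <= dist_seg x s' -> 0 < t <= 1 ->
  dist_seg (interp x y t) s < dist_seg (interp x y t) s'.
Proof.
  intros Hd Hy Ey Hle Ht.
  pose proof (dist_seg_le (interp x y t) s y Hy) as Hs.
  apply Rnot_le_lt; intro Hs'.
  destruct (dist_seg_attained (interp x y t) s') as [q [Hq Eq]].
  assert (q = y) as ->.
  { apply (interp_ball_touch x y q t Ht); [|lra].
    rewrite <- Ey; apply (Rle_trans _ _ _ Hle), dist_seg_le, Hq. }
  apply (Hd y); auto.
Qed.

Definition is_open (P : point -> Prop) : Prop :=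
  forall w, P w -> exists d, 0 < d /\ forall w', dist2 w w' < d -> P w'.

Definition is_dense (P : point -> Prop) : Prop := forall z, closure P z.

Lemma closure_mono (P Q : point -> Prop) z :
  (forall w, P w -> Q w) -> closure P z -> closure Q z.
Proof.
  intros PQ Hz eps He; destruct (Hz eps He) as [y [Py Hy]]; exists y; auto.
Qed.

Lemma is_open_and P Q : is_open P -> is_open Q -> is_open (fun w => P w /\ Q w).
Proof.
  intros HP HQ w [Pw Qw].
  destruct (HP w Pw) as [d1 [Hd1 P1]], (HQ w Qw) as [d2 [Hd2 Q2]].
  exists (Rmin d1 d2); split; [apply Rmin_glb_lt; auto |].
  intros w' Hw'; pose proof (Rmin_l d1 d2); pose proof (Rmin_r d1 d2).
  split; [apply P1 | apply Q2]; lra.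
Qed.

Lemma is_dense_and P Q : is_dense P -> is_dense Q -> is_open Q ->
  is_dense (fun w => P w /\ Q w).
Proof.
  intros DP DQ OQ z eps He.
  destruct (DQ z (eps / 2) ltac:(lra)) as [w1 [Qw1 Hw1]].
  destruct (OQ w1 Qw1) as [d [Hd Qd]].
  destruct (DP w1 (Rmin (eps / 2) d) ltac:(apply Rmin_glb_lt; lra)) as [w [Pw Hw]].
  pose proof (Rmin_l (eps / 2) d); pose proof (Rmin_r (eps / 2) d).
  pose proof (dist2_triangle z w1 w).
  exists w; split; [split; [exact Pw | apply Qd; lra] | lra].
Qed.

Lemma is_open_imp (A : Prop) P : (A -> is_open P) -> is_open (fun w => A -> P w).
Proof.
  intro HA; destruct (classic A) as [a | na].
  - intros w Hw; destruct (HA a w (Hw a)) as [d [Hd Pd]].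
    exists d; split; [exact Hd | intros w' Hw' _; apply Pd, Hw'].
  - intros w _; exists 1; split; [lra | intros w' _ a; contradiction].
Qed.

Lemma is_dense_imp (A : Prop) P : (A -> is_dense P) -> is_dense (fun w => A -> P w).
Proof.
  intro HA; destruct (classic A) as [a | na].
  - intro z; apply (closure_mono P); [intros w Pw _; exact Pw | apply HA, a].
  - intros z eps He; exists z; rewrite dist2_xx; split; [intro a; contradiction | exact He].
Qed.

Lemma Forall_In_cons {A : Type} (P : A -> Prop) a l :
  (P a /\ forall b, In b l -> P b) <-> forall b, In b (a :: l) -> P b.
Proof.
  split; [intros [Pa Pl] b [<- | Hb]; auto | intro H; split; auto with datatypes].
Qed.

Lemma is_open_Forall {A : Type} (l : list A) (P : A -> point -> Prop) :
  (forall a, In a l -> is_open (P a)) -> is_open (fun w => forall a, In a l -> P a w).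
Proof.
  induction l as [| a l IH]; intro Hl.
  - intros w _; exists 1; split; [lra | intros _ _ b []].
  - intros w Hw; apply Forall_In_cons in Hw.
    destruct (is_open_and _ _ (Hl a (in_eq a l)) (IH (fun b Hb => Hl b (in_cons a b l Hb))) w Hw)
      as [d [Hd Pd]].
    exists d; split; [exact Hd | intros w' Hw'; apply Forall_In_cons, Pd, Hw'].
Qed.

Lemma is_dense_Forall {A : Type} (l : list A) (P : A -> point -> Prop) :
  (forall a, In a l -> is_open (P a) /\ is_dense (P a)) ->
  is_dense (fun w => forall a, In a l -> P a w).
Proof.
  induction l as [| a l IH]; intro Hl.
  - intros z eps He; exists z; rewrite dist2_xx; split; [intros b [] | exact He].
  - intro z; apply (closure_mono (fun w => P a w /\ forall b, In b l -> P b w)).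
    + intro w; apply (Forall_In_cons (fun b => P b w)).
    + apply is_dense_and.
      * apply Hl, in_eq.
      * apply IH; intros b Hb; apply Hl, in_cons, Hb.
      * apply is_open_Forall; intros b Hb; apply Hl, in_cons, Hb.
Qed.

Lemma dist_seg_lt_open s s' : is_open (fun w => dist_seg w s < dist_seg w s').
Proof.
  intros w Hw; set (g := dist_seg w s' - dist_seg w s).
  exists (g / 2); split; [unfold g; lra |].
  intros w' Hw'.
  pose proof (dist_seg_lipschitz w' w s); pose proof (dist_seg_lipschitz w w' s').
  rewrite (dist2_sym w' w) in *; unfold g in *; lra.
Qed.

Lemma dist_seg_neq_open s s' : is_open (fun w => dist_seg w s <> dist_seg w s').
Proof.
  intros w Hw; destruct (Rdichotomy _ _ Hw) as [Hlt | Hgt].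
  - destruct (dist_seg_lt_open s s' w Hlt) as [d [Hd Pd]].
    exists d; split; [exact Hd | intros w' Hw'; apply Rlt_not_eq, Pd, Hw'].
  - destruct (dist_seg_lt_open s' s w Hgt) as [d [Hd Pd]].
    exists d; split; [exact Hd | intros w' Hw'; apply Rgt_not_eq, Pd, Hw'].
Qed.

Lemma exists_small_scale r eps : 0 <= r -> 0 < eps -> exists t, 0 < t <= 1 /\ t * r < eps.
Proof.
  intros Hr He; exists (eps / (eps + r)).
  assert (Ht : eps / (eps + r) * (eps + r) = eps) by (field; lra).
  assert (Ht0 : 0 < eps / (eps + r)) by (apply Rdiv_lt_0_compat; lra).
  split; [split |]; nra.
Qed.

(* Near a point equidistant from [s] and [s'], step towards its nearest point on [s]. *)
Lemma dist_seg_neq_dense s s' : seg_disjoint s s' ->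
  is_dense (fun w => dist_seg w s <> dist_seg w s').
Proof.
  intros Hd z eps He.
  destruct (Req_dec (dist_seg z s) (dist_seg z s')) as [Eq | Ne].
  2: { exists z; rewrite dist2_xx; auto. }
  destruct (dist_seg_attained z s) as [y [Hy Ey]].
  destruct (exists_small_scale (dist2 z y) eps (dist2_ge0 z y) He) as [t [Ht Htr]].
  exists (interp z y t); split.
  - apply Rlt_not_eq, (dist_seg_lt_toward_nearest z y t s s'); auto; lra.
  - rewrite dist2_interp_l; lra.
Qed.

Lemma closure_dist_seg_le (P : point -> Prop) x s s' :
  (forall w, P w -> dist_seg w s < dist_seg w s') -> closure P x ->
  dist_seg x s <= dist_seg x s'.
Proof.
  intros HP Hx; apply Rnot_lt_le; intro Hlt.
  destruct (Hx ((dist_seg x s - dist_seg x s') / 2) ltac:(lra)) as [w [Pw Hw]].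
  pose proof (HP w Pw).
  pose proof (dist_seg_lipschitz x w s); pose proof (dist_seg_lipschitz w x s').
  rewrite (dist2_sym w x) in *; lra.
Qed.

Lemma list_argmin (f : nat -> R) (l : list nat) :
  l <> [] -> exists m, In m l /\ forall j, In j l -> f m <= f j.
Proof.
  induction l as [| a l IH]; intro Hl; [congruence |].
  destruct l as [| b l'].
  - exists a; split; [left; reflexivity | intros j [<- | []]; lra].
  - destruct (IH ltac:(congruence)) as [m [Hm Pm]].
    destruct (Rle_dec (f a) (f m)).
    + exists a; split; [left; reflexivity |].
      intros j [<- | Hj]; [lra | specialize (Pm j Hj); lra].
    + exists m; split; [right; exact Hm |]. intros j [<- | Hj]; [lra | auto].
Qed.

Lemma lowest_indices (f : nat -> R) (n k : nat) :
  (forall i j, (i < n)%nat -> (j < n)%nat -> i <> j -> f i <> f j) -> (k <= n)%nat ->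
  exists H, ksubset n k H /\
    forall i j, In i H -> (j < n)%nat -> ~ In j H -> f i < f j.
Proof.
  intro Hinj; induction k as [| k IH]; intro Hk.
  - exists []; split; [split; [constructor | split; [reflexivity | intros i []]] | intros i j []].
  - destruct (IH ltac:(lia)) as [H [[ND [Len Bd]] Low]].
    set (C := filter (fun j => if in_dec Nat.eq_dec j H then false else true) (seq 0 n)).
    assert (CC : forall j, In j C <-> (j < n)%nat /\ ~ In j H).
    { intro j; unfold C; rewrite filter_In, in_seq.
      destruct (in_dec Nat.eq_dec j H); intuition (try lia; try congruence). }
    assert (Cne : C <> []).
    { intro E; assert (Hincl : incl (seq 0 n) H).
      { intros j Hj; rewrite in_seq in Hj; apply NNPP; intro NjH.
        assert (Hj' : In j C) by (apply CC; split; [lia | exact NjH]).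
        rewrite E in Hj'; destruct Hj'. }
      pose proof (NoDup_incl_length (seq_NoDup n 0) Hincl); rewrite length_seq in *; lia. }
    destruct (list_argmin f C Cne) as [m [Hm Pm]]; apply CC in Hm as [Hmn HmH].
    exists (m :: H); split; [split; [constructor; auto | split; [simpl; lia |]] |].
    + intros i [<- | Hi]; auto.
    + intros i j Hi Hj Hnj.
      assert (NjH : ~ In j H) by (intro; apply Hnj; right; auto).
      assert (Njm : j <> m) by (intro; apply Hnj; left; auto).
      destruct Hi as [-> | Hi]; [| auto].
      specialize (Pm j (proj2 (CC j) (conj Hj NjH))).
      assert (f i <> f j) by (apply Hinj; auto); lra.
Qed.

Fixpoint sublists (l : list nat) : list (list nat) :=
  match l with
  | [] => [[]]
  | a :: l' => map (cons a) (sublists l') ++ sublists l'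
  end.

Lemma filter_In_sublists (g : nat -> bool) l : In (filter g l) (sublists l).
Proof.
  induction l as [| a l IH]; simpl; auto.
  destruct (g a); apply in_or_app; [left; apply in_map | right]; auto.
Qed.

Lemma finite_witness_all_pos {A : Type} (F : list A) (P : R -> A -> Prop) :
  (forall e e' a, 0 < e <= e' -> P e a -> P e' a) ->
  (forall e, 0 < e -> exists a, In a F /\ P e a) ->
  exists a, In a F /\ forall e, 0 < e -> P e a.
Proof.
  intro Mono; induction F as [| a F IH]; intro Hall.
  - destruct (Hall 1 ltac:(lra)) as [b [[] _]].
  - destruct (classic (forall e, 0 < e -> P e a)) as [Ha | Ha].
    + exists a; split; [left |]; auto.
    + apply not_all_ex_not in Ha as [e0 He0]; apply imply_to_and in He0 as [He0 Ne0].
      destruct IH as [b [Hb Pb]]; [| exists b; split; [right |]; auto].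
      intros e He; set (e1 := Rmin e e0).
      assert (He1 : 0 < e1) by (apply Rmin_glb_lt; lra).
      destruct (Hall e1 He1) as [b [[<- | Hb] Pb]].
      * exfalso; apply Ne0, (Mono e1); [split; [exact He1 | apply Rmin_r] | exact Pb].
      * exists b; split; [exact Hb | apply (Mono e1); [split; [exact He1 | apply Rmin_l] | exact Pb]].
Qed.

(* A canonical representative of the members of [H], so that the candidate
   k-sets range over the finite list [sublists (seq 0 n)]. *)
Definition enum_subset (n : nat) (H : list nat) : list nat :=
  filter (fun j => if in_dec Nat.eq_dec j H then true else false) (seq 0 n).

Lemma In_enum_subset n H j :
  (forall i, In i H -> (i < n)%nat) -> In j (enum_subset n H) <-> In j H.
Proof.
  intro Bd; unfold enum_subset; rewrite filter_In, in_seq.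
  destruct (in_dec Nat.eq_dec j H) as [Hj | Hj]; [specialize (Bd j Hj) |]; intuition (try lia; try discriminate).
Qed.

Lemma ksubset_enum_subset n k H : ksubset n k H -> ksubset n k (enum_subset n H).
Proof.
  intros (ND & Len & Bd).
  assert (ND' : NoDup (enum_subset n H)) by apply NoDup_filter, seq_NoDup.
  split; [exact ND' | split].
  - apply Nat.le_antisymm; rewrite <- Len; apply NoDup_incl_length; auto;
      intro j; apply In_enum_subset; exact Bd.
  - intros i Hi; apply Bd, (In_enum_subset n H i Bd), Hi.
Qed.

Section KOrderVoronoi.

Variables (segs : nat -> segment) (n k i0 : nat).
Hypothesis segs_disjoint : forall i j, (i < n)%nat -> (j < n)%nat -> i <> j ->
  seg_disjoint (segs i) (segs j).
Hypothesis k_le_n : (k <= n)%nat.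
Hypothesis i0_lt_n : (i0 < n)%nat.

Definition generic_point (w : point) : Prop :=
  forall i j, (i < n)%nat -> (j < n)%nat -> i <> j -> dist_seg w (segs i) <> dist_seg w (segs j).

Lemma generic_point_dense : is_dense generic_point.
Proof.
  set (P := fun (pr : nat * nat) w =>
    fst pr <> snd pr -> dist_seg w (segs (fst pr)) <> dist_seg w (segs (snd pr))).
  assert (D : is_dense (fun w => forall pr, In pr (list_prod (seq 0 n) (seq 0 n)) -> P pr w)).
  { apply is_dense_Forall; intros [i j] Hij; apply in_prod_iff in Hij as [Hi Hj].
    rewrite in_seq in Hi, Hj; split.
    - apply is_open_imp; intros _; apply dist_seg_neq_open.
    - apply is_dense_imp; intro Hne; apply dist_seg_neq_dense, segs_disjoint; simpl in *; auto; lia. }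
  intro z; eapply (closure_mono _ _ z); [| apply D]; unfold P.
  intros w Hw i j Hi Hj; apply (Hw (i, j)), in_prod; apply in_seq; lia.
Qed.

Definition closer_except (L : list nat) (w : point) : Prop :=
  forall j, (j < n)%nat -> j <> i0 -> ~ In j L -> dist_seg w (segs i0) < dist_seg w (segs j).

Lemma closer_except_open L : is_open (closer_except L).
Proof.
  assert (O : is_open (fun w => forall j, In j (seq 0 n) ->
    j <> i0 -> ~ In j L -> dist_seg w (segs i0) < dist_seg w (segs j))).
  { apply is_open_Forall; intros j _; apply is_open_imp; intros _.
    apply is_open_imp; intros _; apply dist_seg_lt_open. }
  intros w Hw; destruct (O w (fun j Hj => Hw j (proj2 (proj1 (in_seq n 0 j) Hj)))) as [d [Hd Pd]].
  exists d; split; [exact Hd | intros w' Hw' j Hj; apply (Pd w' Hw'), in_seq; lia].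
Qed.

(* Near [z], fewer than [k] segments can beat [s_i0], so a generic point has
   [s_i0] among its [k] nearest segments. *)
Lemma Vk_H_near L z eps : (length L < k)%nat -> closer_except L z -> 0 < eps ->
  exists H, In H (sublists (seq 0 n)) /\ ksubset n k H /\ In i0 H /\
    exists w, Vk_H segs n H w /\ dist2 z w < eps.
Proof.
  intros HL Hz He.
  destruct (closer_except_open L z Hz) as [d [Hd Pd]].
  destruct (generic_point_dense z (Rmin eps d) ltac:(apply Rmin_glb_lt; auto)) as [w [Gw Hw]].
  pose proof (Rmin_l eps d) as Hme; pose proof (Rmin_r eps d) as Hmd.
  destruct (lowest_indices (fun i => dist_seg w (segs i)) n k Gw k_le_n)
    as [H [(ND & Len & Bd) Low]].
  assert (I0 : In i0 H).
  { apply NNPP; intro Ni0.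
    assert (Hincl : incl H L).
    { intros i Hi; apply NNPP; intro NiL.
      assert (Hii0 : i <> i0) by (intro; subst; tauto).
      pose proof (Low i i0 Hi i0_lt_n Ni0).
      pose proof (Pd w ltac:(lra) i (Bd i Hi) Hii0 NiL); lra. }
    pose proof (NoDup_incl_length ND Hincl); lia. }
  assert (E : forall j, In j (enum_subset n H) <-> In j H) by (intro j; apply In_enum_subset, Bd).
  exists (enum_subset n H); split; [apply filter_In_sublists | split; [| split]].
  - apply ksubset_enum_subset; split; auto.
  - apply E, I0.
  - exists w; split; [| lra].
    intros i j Hi Hj Nj; apply E in Hi; apply Low; auto.
    intro; apply Nj, E; auto.
Qed.

Lemma Vk_s_closer_except L z : (length L < k)%nat -> closer_except L z -> Vk_s segs n k i0 z.
Proof.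
  intros HL Hz.
  set (P := fun e H => ksubset n k H /\ In i0 H /\ exists w, Vk_H segs n H w /\ dist2 z w < e).
  destruct (finite_witness_all_pos (sublists (seq 0 n)) P) as [H [_ PH]].
  - intros e e' H He (Hk & Hi & w & Hw & Hd); split; [| split]; auto.
    exists w; split; [exact Hw | lra].
  - intros e He; destruct (Vk_H_near L z e HL Hz He) as (H & HS & PH); exists H; auto.
  - destruct (PH 1 ltac:(lra)) as (Hk & Hi & _).
    exists H; split; [exact Hk | split; [exact Hi |]].
    intros e He; destruct (PH e He) as (_ & _ & w & Hw & Hd); exists w; auto.
Qed.

Lemma seg_sub_Vk_s p : (0 < k)%nat -> in_seg (segs i0) p -> Vk_s segs n k i0 p.
Proof.
  intros Hk Hp; apply (Vk_s_closer_except [] p); [simpl; lia |].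
  intros j Hj Hji0 _; rewrite (proj2 (dist_seg_eq0 p _) Hp).
  apply (dist_seg_gt0_disjoint p (segs i0)); auto.
Qed.

Lemma Vk_s_interp_nearest x y t : Vk_s segs n k i0 x -> in_seg (segs i0) y ->
  dist_seg x (segs i0) = dist2 x y -> 0 <= t <= 1 -> Vk_s segs n k i0 (interp x y t).
Proof.
  intros Hx Hy Ey Ht; destruct (Req_dec t 0) as [-> | Ht0]; [rewrite interp_0; exact Hx |].
  destruct Hx as (H & (ND & Len & Bd) & HiH & Hcl).
  apply (Vk_s_closer_except (remove Nat.eq_dec i0 H)).
  { rewrite <- Len; apply remove_length_lt, HiH. }
  intros j Hj Hji0 HjL.
  assert (NjH : ~ In j H) by (intro; apply HjL, in_in_remove; auto).
  apply (dist_seg_lt_toward_nearest x y t); [apply segs_disjoint; auto | exact Hy | exact Ey | | lra].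
  apply (closure_dist_seg_le (Vk_H segs n H)); [intros w Hw; apply Hw; auto | exact Hcl].
Qed.

End KOrderVoronoi.

Theorem lemma4 (segs : nat -> segment) (n k i0 : nat)
  (Hnondeg : forall i, (i < n)%nat -> fst (segs i) <> snd (segs i))
  (Hdisj : forall i j, (i < n)%nat -> (j < n)%nat -> i <> j ->
            forall p, ~ (in_seg (segs i) p /\ in_seg (segs j) p))
  (Hk1 : (1 <= k)%nat) (Hkn : (k <= n - 1)%nat) (Hi0 : (i0 < n)%nat) :
  (forall p, in_seg (segs i0) p -> Vk_s segs n k i0 p) /\
  (forall x, Vk_s segs n k i0 x ->
     exists y, in_seg (segs i0) y /\
       forall z, on_seg x y z -> Vk_s segs n k i0 z).
Proof.
  assert (Hkn' : (k <= n)%nat) by lia.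
  split; [intros p; apply seg_sub_Vk_s; auto; lia |].
  intros x Hx; destruct (dist_seg_attained x (segs i0)) as [y [Hy Ey]].
  exists y; split; [exact Hy |].
  intros z [t [Ht ->]]; apply (Vk_s_interp_nearest segs n k i0); auto.
Qed.
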